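(* Let $k<m\le kn$ be positive integers and let $I$ be an instance with $n$ agents and $m$ goods in a single category with cardinality constraint $k$, where each agent $i$ has an additive utility function $u_i:2^M\to\mathbb{R}_{\ge0}$ with $u_i(\emptyset)=0$ (not necessarily normalized). Let $\mathcal{A}^*=(A^*_1,\dots,A^*_n)$ be an allocation maximizing $\sum_i u_i(A_i)$ and let $S=\{i: |A^*_i|>k\}$. Suppose $0<u_i(M)\le 1$ for each $i\in S$ and $\sum_{i\in N\setminus S}u_i(A^*_i)\ge 1$. Then $$\frac{\text{OPT-USW}(I)}{\max_{\mathcal{A}\in \mathcal{C}_k(I)}\text{USW}(\mathcal{A})}\le \frac{1+\sum_{i\in S}u_i(A^*_i)}{1+k\sum_{i\in S}\frac{u_i(A^*_i)}{|A^*_i|}}\le \frac{1+s}{1+\frac{ks^2}{m-1}},$$ where $s=-1+\sqrt{1+\frac{m-1}{k}}$.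
   Context: An allocation is a partition $(A_1,\dots,A_n)$ of the goods $M$, agent $i$ receiving $A_i$; it is cardinal if $|A_i|\le k$ for all $i$, and $\mathcal{C}_k(I)$ denotes the set of cardinal allocations. $\text{USW}(\mathcal{A})=\sum_i u_i(A_i)$ and $\text{OPT-USW}(I)=\text{USW}(\mathcal{A}^* )$ is its maximum over all allocations. *)

From mathcomp Require Import all_boot all_order all_algebra.
Set Implicit Arguments. Unset Strict Implicit. Unset Printing Implicit Defensive.
Import Order.TTheory GRing.Theory Num.Theory.
Local Open Scope ring_scope.

(* Agents are 'I_n, goods are 'I_m (a single category).
   An additive utility profile is u : 'I_n -> 'I_m -> R, with u i g >= 0 the
   value of good g for agent i; u_i(A) = \sum_(g in A) u i g (so u_i(set0)=0).
   An allocation (a partition of M into n, possibly empty, bundles) is encoded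
   as a function assigning each good to the agent receiving it. *)

Definition allocation (n m : nat) := {ffun 'I_m -> 'I_n}.

Definition bundle (n m : nat) (a : allocation n m) (i : 'I_n) : {set 'I_m} :=
  [set g | a g == i].

Definition util (R : numDomainType) (n m : nat) (u : 'I_n -> 'I_m -> R)
  (i : 'I_n) (A : {set 'I_m}) : R := \sum_(g in A) u i g.

Definition USW (R : numDomainType) (n m : nat) (u : 'I_n -> 'I_m -> R)
  (a : allocation n m) : R := \sum_(i < n) util u i (bundle a i).

Definition cardinal (n m k : nat) (a : allocation n m) : bool :=
  [forall i : 'I_n, #|bundle a i| <= k]%N.

(* max_{A in C_k(I)} USW(A); utilities are nonnegative, so 0 is a neutral
   default for the (nonempty, since m <= k n) maximum. *)
Definition max_card_USW (R : realDomainType) (n m k : nat)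
  (u : 'I_n -> 'I_m -> R) : R :=
  \big[Num.max/0]_(a : allocation n m | cardinal k a) USW u a.

From mathcomp Require Import all_boot all_order all_algebra.
From mathcomp Require Import ring lra.

Import Order.TTheory GRing.Theory Num.Theory.
Local Open Scope ring_scope.

(* Every agent keeps its bundle if it has at most k goods, and an agent of S
   keeps only its k most valuable goods, worth at least k/|A*_i| of its bundle;
   since m <= kn the released goods can be handed to agents below capacity.
   This cardinal allocation has welfare at least W_N + kB, where W_N, W_S are
   the welfare outside and inside S and B = sum_S u_i(A*_i)/|A*_i|; as W_N >= 1
   and kB <= W_S, the first ratio is at most (1 + W_S)/(1 + kB).  Since
   u_i(A*_i) <= 1, Cauchy-Schwarz with sum_S |A*_i| <= m - 1 gives
   kB >= q W_S^2 for q = k/(m - 1), and w |-> (1 + w)/(1 + q w^2) is maximal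
   at w = s. *)

Lemma sum_card_fibers (G I : finType) (f : G -> I) (D : {set G}) (P : {pred I}) :
  (\sum_(i in P) #|[set g in D | f g == i]|)%N = #|[set g in D | f g \in P]|.
Proof.
rewrite -sum1_card (partition_big f (mem P)) /=; last by move=> g; rewrite inE => /andP[].
apply: eq_bigr => i Pi; rewrite -sum1_card; apply: eq_bigl => g; rewrite !inE.
by case: eqP => [->|]; rewrite ?Pi ?andbT ?andbF.
Qed.

Lemma exists_underloaded {G I : finType} (k : nat) (b : G -> I) (D : {set G}) :
  (#|D| < k * #|I|)%N -> exists i, (#|[set g in D | b g == i]| < k)%N.
Proof.
move=> ltDk; apply/existsP; apply: contraTT ltDk => /existsPn overloaded.
rewrite -leqNgt mulnC -sum_nat_const.
have -> : #|D| = (\sum_(i in I) #|[set g in D | b g == i]|)%N.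
  by rewrite sum_card_fibers; apply: eq_card => g; rewrite !inE andbT.
by apply: leq_sum => i _; rewrite leqNgt overloaded.
Qed.

Lemma extend_bounded_loads {G I : finType} (k : nat) (b : G -> I) (D : {set G}) :
  (#|G| <= k * #|I|)%N -> (forall i, #|[set g in D | b g == i]| <= k)%N ->
  exists a : {ffun G -> I},
    (forall i, #|[set g | a g == i]| <= k)%N /\ {in D, forall g, a g = b g}.
Proof.
move=> cap; move cD: #|~: D| => N; elim: N b D cD => [|N IH] b D cD load.
  have DT : D = setT by rewrite -[D]setCK (cards0_eq cD) setC0.
  exists [ffun g => b g]; split=> [i|g _]; last by rewrite ffunE.
  by apply: leq_trans (load i); apply: subset_leq_card; apply/subsetP => g;
    rewrite !inE ffunE DT inE.
have [g0 g0D] : exists g0, g0 \in ~: D by apply/set0Pn; rewrite -card_gt0 cD.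
have [i0 under_i0] : exists i0, (#|[set g in D | b g == i0]| < k)%N.
  apply: (exists_underloaded k b D); apply: leq_trans cap.
  by rewrite -(cardsC D) cD addnS ltnS leq_addr.
pose b' g := if g == g0 then i0 else b g.
have load' i : (#|[set g in g0 |: D | b' g == i]| <= k)%N.
  rewrite /b'; have [->|ne_i] := eqVneq i i0.
    apply: leq_trans under_i0; rewrite -add1n -(cards1 g0).
    apply: leq_trans (leq_card_setU _ _).
    by apply: subset_leq_card; apply/subsetP => g; rewrite !inE; case: eqP.
  apply: leq_trans (load i); apply: subset_leq_card; apply/subsetP => g; rewrite !inE.
  by case: eqP => [_ /andP[_ /eqP eq_i]|_ /=//]; rewrite eq_i eqxx in ne_i.
have cD' : #|~: (g0 |: D)| = N.
  by move: cD; rewrite setCU (cardsD1 g0 (~: D)) g0D setDE setIC => -[].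
have [a [load_a a_eq]] := IH b' (g0 |: D) cD' load'.
exists a; split=> // g gD; rewrite a_eq ?inE ?gD ?orbT // /b'.
by case: eqP => // eq_g; move: g0D; rewrite -eq_g inE gD.
Qed.

Lemma exists_heavy_subset {R : realDomainType} {T : finType} (f : T -> R) {k : nat}
    {A : {set T}} : (k <= #|A|)%N ->
  exists B : {set T}, [/\ B \subset A, #|B| = k &
    k%:R * \sum_(x in A) f x <= #|A|%:R * \sum_(x in B) f x].
Proof.
move cA: #|A| => N; elim: N A cA => [|N IH] A cA.
  by rewrite leqn0 => /eqP ->; exists A; rewrite cA.
rewrite leq_eqVlt ltnS => /orP[/eqP-> | le_kN]; first by exists A; rewrite cA.
have [g0 g0A] : exists g0, g0 \in A by apply/set0Pn; rewrite -card_gt0 cA.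
case: (arg_minP f g0A) => g gA' min_g.
have gA : g \in A by exact: gA'.
have cAg : #|A :\ g| = N by move: cA; rewrite (cardsD1 g A) gA add1n => -[].
have [B [sub_B cB heavy_B]] := IH _ cAg le_kN.
have sub_BA : B \subset A := subset_trans sub_B (subsetDl A [set g]).
exists B; split=> //.
have min_le_B : k%:R * f g <= \sum_(x in B) f x.
  rewrite -cB mulr_natl -sumr_const; apply: ler_sum => x xB.
  exact/min_g/(subsetP sub_BA).
rewrite (big_setD1 g gA) /= mulrDr -addn1 natrD mulrDl mul1r addrC.
exact: lerD.
Qed.

Lemma ler_ratio_shift (R : realFieldType) (a b c M : R) :
  1 <= a -> 0 <= b <= c -> a + b <= M -> (a + c) / M <= (1 + c) / (1 + b).
Proof.
move=> a_ge1 /andP[b_ge0 b_le_c] le_M.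
have M_gt0 : 0 < M by lra.
have b1_gt0 : 0 < 1 + b by lra.
rewrite ler_pdivrMr // mulrAC ler_pdivlMr //.
have : (1 + c) * (a + b) <= (1 + c) * M by apply: ler_wpM2l; lra.
nra.
Qed.

Lemma ler_sum_sqr_div {R : realFieldType} {I : finType} {P : {pred I}} {x c : I -> R}
    {d : R} :
  0 < d -> (forall i, i \in P -> 0 < c i) -> \sum_(i in P) c i <= d ->
  (\sum_(i in P) x i) ^+ 2 / d <= \sum_(i in P) x i ^+ 2 / c i.
Proof.
move=> d_gt0 c_gt0 le_d; set W := \sum_(i in P) x i; pose l := W / d.
(* Each term lies above its tangent at the ratio x i / c i = l of the equality case. *)
have tangent i : i \in P -> 2 * l * x i - l ^+ 2 * c i <= x i ^+ 2 / c i.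
  move=> iP; have ci_gt0 := c_gt0 i iP; set y := x i / c i.
  have -> : x i = y * c i by rewrite /y divfK ?gt_eqF.
  have -> : (y * c i) ^+ 2 / c i = y ^+ 2 * c i by field; rewrite gt_eqF.
  have : 0 <= (y - l) ^+ 2 * c i by rewrite mulr_ge0 ?sqr_ge0 // ltW.
  nra.
have -> : W ^+ 2 / d = 2 * l * W - l ^+ 2 * d by rewrite /l; field; rewrite gt_eqF.
apply: le_trans _ (ler_sum _ tangent); rewrite sumrB -!mulr_sumr -/W lerD2l lerN2.
by apply: ler_wpM2l; rewrite ?sqr_ge0.
Qed.

Lemma ler_ratio_quadratic_max (R : realFieldType) (q s w b : R) :
  0 < q -> 0 <= 1 + s -> q * (1 + s) ^+ 2 = 1 + q -> 0 <= 1 + w -> q * w ^+ 2 <= b ->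
  (1 + w) / (1 + b) <= (1 + s) / (1 + q * s ^+ 2).
Proof.
move=> q_gt0 s_ge0 def_s w_ge0 le_b.
have qw_ge0 : 0 <= q * w ^+ 2 := mulr_ge0 (ltW q_gt0) (sqr_ge0 w).
have qs_ge0 : 0 <= q * s ^+ 2 := mulr_ge0 (ltW q_gt0) (sqr_ge0 s).
have b1_gt0 : 0 < 1 + b by lra.
have qs1_gt0 : 0 < 1 + q * s ^+ 2 by lra.
rewrite ler_pdivrMr // mulrAC ler_pdivlMr //.
(* By the choice of s, (1 + s)(1 + q w^2) - (1 + w)(1 + q s^2) = q (1 + s) (w - s)^2. *)
have := mulr_ge0 (mulr_ge0 (ltW q_gt0) s_ge0) (sqr_ge0 (w - s)).
have : (1 + s) * (1 + q * w ^+ 2) <= (1 + s) * (1 + b) by apply: ler_wpM2l; rewrite ?lerD2l.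
nra.
Qed.

Lemma util_subset {R : numDomainType} {n m : nat} {u : 'I_n -> 'I_m -> R} {i : 'I_n}
    {A B : {set 'I_m}} :
  (forall g, 0 <= u i g) -> A \subset B -> util u i A <= util u i B.
Proof.
move=> u_ge0 sub_AB; rewrite /util [leRHS](big_setID A) /= (setIidPr sub_AB) lerDl.
exact: sumr_ge0.
Qed.

Section TruncatedAllocation.

Variables (R : realFieldType) (n m k : nat) (u : 'I_n -> 'I_m -> R) (a0 : allocation n m).
Hypothesis u_ge0 : forall i g, 0 <= u i g.

Let S := [set i | (k < #|bundle a0 i|)%N].

Lemma max_card_USW_ge : (m <= k * n)%N ->
  \sum_(i in ~: S) util u i (bundle a0 i)
    + k%:R * \sum_(i in S) util u i (bundle a0 i) / #|bundle a0 i|%:R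
  <= max_card_USW k u.
Proof.
move=> cap.
have [T heavy_T] :=
  fin_all_exists (fun i => exists_heavy_subset (u i) (geq_minr k #|bundle a0 i|)).
have T_bundle i g : g \in T i -> a0 g = i.
  by case: (heavy_T i) => /subsetP sub_T _ _ /sub_T; rewrite inE => /eqP.
pose D := [set g | g \in T (a0 g)].
have load i : (#|[set g in D | a0 g == i]| <= k)%N.
  case: (heavy_T i) => _ card_T _; apply: leq_trans (geq_minl k #|bundle a0 i|).
  rewrite -card_T; apply: subset_leq_card; apply/subsetP => g.
  by rewrite !inE => /andP[gT /eqP <-].
have cap' : (#|'I_m| <= k * #|'I_n|)%N by rewrite !card_ord.
have [a [card_a a_eq]] := extend_bounded_loads k a0 D cap' load.
have T_sub_a i : T i \subset bundle a i.
  apply/subsetP => g gT; have a0g := T_bundle _ _ gT.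
  by rewrite inE a_eq ?a0g // /D inE a0g.
apply: le_trans (_ : USW u a <= _); last first.
  by apply: le_bigmax_cond; apply/forallP => i; exact: card_a.
apply: le_trans (_ : \sum_i util u i (T i) <= _); last first.
  by apply: ler_sum => i _; apply: util_subset.
rewrite [leRHS](bigID (mem S)) [leRHS]addrC /= mulr_sumr.
apply: lerD.
  rewrite (eq_bigl _ _ (fun i => in_setC i S)); apply: ler_sum => i.
  rewrite inE -leqNgt => small_i; case: (heavy_T i) => sub_T card_T _.
  suff -> : T i = bundle a0 i by [].
  by apply/eqP; rewrite eqEcard sub_T card_T leq_min small_i leqnn.
apply: ler_sum => i; rewrite inE => large_i.
case: (heavy_T i) => _ _; rewrite (minn_idPl (ltnW large_i)) mulrA ler_pdivrMr; last first.
  by rewrite ltr0n (leq_ltn_trans _ large_i).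
by rewrite [leRHS]mulrC.
Qed.

Lemma mulr_sum_util_div_card_le :
  k%:R * \sum_(i in S) util u i (bundle a0 i) / #|bundle a0 i|%:R
    <= \sum_(i in S) util u i (bundle a0 i).
Proof.
rewrite mulr_sumr; apply: ler_sum => i; rewrite inE => large_i.
have card_gt0 : 0 < #|bundle a0 i|%:R :> R by rewrite ltr0n (leq_ltn_trans _ large_i).
rewrite mulrA ler_pdivrMr // mulrC ler_wpM2l ?ler_nat 1?ltnW //.
exact: sumr_ge0.
Qed.

Lemma USW_split : USW u a0 =
  \sum_(i in ~: S) util u i (bundle a0 i) + \sum_(i in S) util u i (bundle a0 i).
Proof. by rewrite /USW (bigID (mem S)) addrC (eq_bigl _ _ (fun i => in_setC i S)). Qed.

Lemma sum_card_large_bundles_lt : 0 < \sum_(i in ~: S) util u i (bundle a0 i) ->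
  (\sum_(i in S) #|bundle a0 i| < m)%N.
Proof.
move=> pos.
have [g g_notS] : exists g, a0 g \notin S.
  apply/existsP; apply: contraTT pos => /existsPn allS; rewrite -leNgt.
  rewrite big1 // => i i_notS.
  suff -> : bundle a0 i = set0 by rewrite /util big_set0.
  apply/setP => h; rewrite !inE; apply/negbTE/eqP => a0h.
  by move: (allS h); rewrite a0h -in_setC i_notS.
rewrite (eq_bigr (fun i => #|[set g in setT | a0 g == i]|)); last first.
  by move=> i _; apply: eq_card => h; rewrite !inE.
rewrite sum_card_fibers; apply: (@leq_trans #|[set: 'I_m]|); last by rewrite cardsT card_ord.
apply: proper_card; rewrite properT.
by apply/eqP => full; move: (in_setT g); rewrite -{1}full in_set (negPf g_notS) andbF.
Qed.

Lemma sqr_sum_util_div_le : (1 < m)%N -> (\sum_(i in S) #|bundle a0 i| < m)%N ->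
  (forall i, i \in S -> util u i setT <= 1) ->
  (\sum_(i in S) util u i (bundle a0 i)) ^+ 2 / (m%:R - 1)
    <= \sum_(i in S) util u i (bundle a0 i) / #|bundle a0 i|%:R.
Proof.
move=> m_gt1 lt_m util_le1.
have card_gt0 i : i \in S -> 0 < #|bundle a0 i|%:R :> R.
  by rewrite inE ltr0n; apply: leq_ltn_trans.
apply: le_trans (ler_sum_sqr_div _ card_gt0 _) _.
- by rewrite subr_gt0 ltr1n.
- by rewrite -natr_sum -(natrB _ (ltnW m_gt1)) ler_nat leq_subRL ?add1n // ltnW.
apply: ler_sum => i iS; apply: ler_wpM2r; first by rewrite invr_ge0.
have util_ge0 : 0 <= util u i (bundle a0 i) by apply: sumr_ge0.
rewrite expr2 ler_piMl //; apply: le_trans (util_le1 i iS).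
exact: util_subset (u_ge0 i) (subsetT _).
Qed.

End TruncatedAllocation.

Theorem lemma3 (R : rcfType) (n m k : nat)
  (u : 'I_n -> 'I_m -> R) (astar : allocation n m) :
  (0 < k)%N -> (0 < n)%N -> (k < m)%N -> (m <= k * n)%N ->
  (forall i g, 0 <= u i g) ->
  (forall a : allocation n m, USW u a <= USW u astar) ->
  let S := [set i : 'I_n | (k < #|bundle astar i|)%N] in
  (forall i, i \in S -> 0 < util u i setT /\ util u i setT <= 1) ->
  1 <= \sum_(i in ~: S) util u i (bundle astar i) ->
  let s := -1 + Num.sqrt (1 + (m%:R - 1) / k%:R) in
  USW u astar / max_card_USW k u
    <= (1 + \sum_(i in S) util u i (bundle astar i))
       / (1 + k%:R * \sum_(i in S) (util u i (bundle astar i) / #|bundle astar i|%:R))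
  /\
  (1 + \sum_(i in S) util u i (bundle astar i))
       / (1 + k%:R * \sum_(i in S) (util u i (bundle astar i) / #|bundle astar i|%:R))
    <= (1 + s) / (1 + k%:R * s ^+ 2 / (m%:R - 1)).
Proof.
move=> k_gt0 _ lt_km cap u_ge0 _ S util_le1 WN_ge1 s.
set WS := \sum_(i in S) _; set B := \sum_(i in S) _.
have WS_ge0 : 0 <= WS by apply: sumr_ge0 => i _; apply: sumr_ge0.
have B_ge0 : 0 <= B.
  by apply: sumr_ge0 => i _; apply: divr_ge0; [apply: sumr_ge0 | apply: ler0n].
have kB_le_WS : k%:R * B <= WS := mulr_sum_util_div_card_le R n m k u astar u_ge0.
split.
  rewrite (USW_split R n m k u astar); apply: ler_ratio_shift => //.
    by rewrite kB_le_WS mulr_ge0.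
  exact: max_card_USW_ge.
have m_gt1 : (1 < m)%N by apply: leq_ltn_trans lt_km.
have m1_gt0 : 0 < m%:R - 1 :> R by rewrite subr_gt0 ltr1n.
have lt_m := sum_card_large_bundles_lt R n m k u astar (lt_le_trans ltr01 WN_ge1).
have sqr_WS_le := sqr_sum_util_div_le R n m k u astar u_ge0 m_gt1 lt_m
  (fun i iS => (util_le1 i iS).2).
have def_s : 1 + s = Num.sqrt (1 + (m%:R - 1) / k%:R) by rewrite /s addrA subrr add0r.
have k_gt0' : 0 < k%:R :> R by rewrite ltr0n.
rewrite [k%:R * s ^+ 2 / _]mulrAC.
apply: ler_ratio_quadratic_max.
- by rewrite divr_gt0.
- by rewrite def_s sqrtr_ge0.
- rewrite def_s sqr_sqrtr; last by rewrite addr_ge0 // divr_ge0 // ltW.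
  by field; rewrite !gt_eqF.
- by rewrite addr_ge0.
by rewrite mulrAC -mulrA ler_wpM2l.
Qed.
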